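(* Let $\mathcal F=\{F_1,\dots,F_k\}$, $\mathcal I_0=\{0,1\}^k$, $\mathcal I=\mathcal I_0\setminus\{\boldsymbol 0\}$, $I=2^k-1$, and let $\mathcal F_{asc}$ be a nonempty ascending class of nonempty subsets of $\mathcal F$, with $\mathcal F_{des}=2^{\mathcal F}\setminus\mathcal F_{asc}\setminus\{\varnothing\}$. Let $\mathbf A$ be the $|\mathcal F_{des}|\times I$ matrix with entry $1$ in row $W\in\mathcal F_{des}$, column $\boldsymbol i\in\mathcal I$ if $W\subseteq\phi(\boldsymbol i)$ and $0$ otherwise, and let $$\mathbf A_1=\begin{pmatrix}\boldsymbol 1^\top\\ \mathbf A\end{pmatrix},\qquad \mathbf A_0=\begin{pmatrix}1&\boldsymbol 1^\top\\ \boldsymbol 0&\mathbf A\end{pmatrix},$$ of sizes $(|\mathcal F_{des}|+1)\times I$ and $(|\mathcal F_{des}|+1)\times(I+1)$, where the first column of $\mathbf A_0$ corresponds to the zero cell $\boldsymbol 0$. Then: (i) $HAS(\mathcal F_{asc})$ and $QLL(\mathcal F_{asc})$ are the relational models on $\mathcal I$ generated by $\mathbf A$ and $\mathbf A_1$, respectively; (ii) $LL(\mathcal F_{asc})$ is the relational model on $\mathcal I_0$ generated by $\mathbf A_0$; (iii) $HAS(\mathcal F_{asc})$ and $LL(\mathcal F_{asc})$ each have $|\mathcal F_{asc}|$ degrees of freedom, and $QLL(\mathcal F_{asc})$ has $|\mathcal F_{asc}|-1$ degrees of freedom.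
   Context: For a cell $\boldsymbol i$, $\phi(\boldsymbol i)$ is the set of features whose coordinate in $\boldsymbol i$ is $1$ ($\phi(\boldsymbol 0)=\varnothing$). An ascending class is closed under supersets within $\mathcal F$. The relational model on a finite sample space $\mathcal T$ generated by a 0–1 matrix $\mathbf M$ with columns indexed by $\mathcal T$ is the set of strictly positive probability distributions $\boldsymbol p$ on $\mathcal T$ with $\log\boldsymbol p=\mathbf M^\top\boldsymbol\beta$ for some $\boldsymbol\beta$; its number of degrees of freedom is $|\mathcal T|-\mathrm{rank}(\mathbf M)$. $HAS(\mathcal F_{asc})$: strictly positive distributions $\boldsymbol p$ on $\mathcal I$ such that, writing $\log p(\boldsymbol i)=\sum_{\varnothing\neq V\subseteq\phi(\boldsymbol i)}\beta_V$ (a unique representation), $\beta_V=0$ for all $V\in\mathcal F_{asc}$ (equivalently, all conditional Aitchison–Silvey ratios $\mathrm{CASR}(V\mid\mathcal F\setminus V=\mathbf 0)=\prod_{\varnothing\ne U\subseteq V,|U|\equiv|V|(2)}p(U)/\prod_{\varnothing\ne U\subseteq V,|U|\not\equiv|V|(2)}p(U)$ equal $1$ for $V\in\mathcal F_{asc}$). $LL(\mathcal F_{asc})$: strictly positive distributions $\boldsymbol p$ on $\mathcal I_0$ such that, writing $\log p(\boldsymbol i)=\sum_{V\subseteq\phi(\boldsymbol i)}\beta_V$ ($V$ ranging over all subsets including $\varnothing$), $\beta_V=0$ for all $V\in\mathcal F_{asc}$ (the hierarchical log-linear model). $QLL(\mathcal F_{asc})$: the set of distributions $\boldsymbol\pi$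 on $\mathcal I$ of the form $\pi(\boldsymbol i)=p(\boldsymbol i)/\sum_{\boldsymbol j\in\mathcal I}p(\boldsymbol j)$ for some $\boldsymbol p\in LL(\mathcal F_{asc})$. *)

From HB Require Import structures.
From mathcomp Require Import all_boot all_order all_algebra.
From mathcomp Require Import reals exp.
Set Implicit Arguments. Unset Strict Implicit. Unset Printing Implicit Defensive.
Import Order.TTheory GRing.Theory Num.Theory.
Local Open Scope ring_scope.

(* Features F_1..F_k are indexed by 'I_k.  A cell i in {0,1}^k is identified
   with phi(i), the set of features whose coordinate is 1, i.e. with a set
   {set 'I_k}.  Hence I_0 = {set 'I_k}, and I = nonzero cells = nonempty sets. *)
Definition cellI (k : nat) := {A : {set 'I_k} | A != set0}.

Definition ascending (k : nat) (Fasc : {set {set 'I_k}}) : Prop :=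
  forall V W : {set 'I_k}, V \in Fasc -> V \subset W -> W \in Fasc.

Definition in_Fdes (k : nat) (Fasc : {set {set 'I_k}}) (W : {set 'I_k}) : bool :=
  (W \notin Fasc) && (W != set0).
Definition Fdes (k : nat) (Fasc : {set {set 'I_k}}) :=
  {W : {set 'I_k} | in_Fdes Fasc W}.

Definition rel_model (R : realType) (S T : finType) (M : S -> T -> R)
    (p : T -> R) : Prop :=
  (forall t, 0 < p t) /\ \sum_(t : T) p t = 1 /\
  exists beta : S -> R, forall t, ln (p t) = \sum_(s : S) M s t * beta s.

Definition mx_of (R : realType) (S T : finType) (M : S -> T -> R)
  : 'M[R]_(#|S|, #|T|) := \matrix_(i, j) M (enum_val i) (enum_val j).

Definition dof (R : realType) (S T : finType) (M : S -> T -> R) : nat :=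
  (#|T| - \rank (mx_of M))%N.

Definition matA (R : realType) (k : nat) (Fasc : {set {set 'I_k}})
  (W : Fdes Fasc) (i : cellI k) : R :=
  if val W \subset val i then 1 else 0.

(* A_1 = (1^T ; A): the extra first row is the [None] row *)
Definition matA1 (R : realType) (k : nat) (Fasc : {set {set 'I_k}})
  (W : option (Fdes Fasc)) (i : cellI k) : R :=
  match W with None => 1 | Some W => matA R W i end.

(* A_0 = (1 1^T ; 0 A): columns indexed by I_0 = {set 'I_k}, the zero cell
   being set0 (the first column). *)
Definition matA0 (R : realType) (k : nat) (Fasc : {set {set 'I_k}})
  (W : option (Fdes Fasc)) (i : {set 'I_k}) : R :=
  match W with
  | None => 1
  | Some W => if i == set0 then 0 else (if val W \subset i then 1 else 0)
  end.

Definition HAS (R : realType) (k : nat) (Fasc : {set {set 'I_k}})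
    (p : cellI k -> R) : Prop :=
  (forall i, 0 < p i) /\ \sum_(i : cellI k) p i = 1 /\
  exists beta : cellI k -> R,
    (forall i : cellI k, ln (p i) = \sum_(V : cellI k | val V \subset val i) beta V)
    /\ (forall V : cellI k, val V \in Fasc -> beta V = 0).

Definition LL (R : realType) (k : nat) (Fasc : {set {set 'I_k}})
    (p : {set 'I_k} -> R) : Prop :=
  (forall i, 0 < p i) /\ \sum_(i : {set 'I_k}) p i = 1 /\
  exists beta : {set 'I_k} -> R,
    (forall i : {set 'I_k}, ln (p i) = \sum_(V : {set 'I_k} | V \subset i) beta V)
    /\ (forall V : {set 'I_k}, V \in Fasc -> beta V = 0).

Definition QLL (R : realType) (k : nat) (Fasc : {set {set 'I_k}})
    (pi : cellI k -> R) : Prop :=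
  exists p : {set 'I_k} -> R, LL Fasc p /\
    forall i : cellI k, pi i = p (val i) / \sum_(j : cellI k) p (val j).

From HB Require Import structures.
From mathcomp Require Import all_boot all_order all_algebra.
From mathcomp Require Import reals sequences exp.
Import Order.TTheory GRing.Theory Num.Theory.
Set Implicit Arguments. Unset Strict Implicit. Unset Printing Implicit Defensive.
Local Open Scope ring_scope.

(** Since F_asc is ascending and avoids the empty set, a coefficient vector
  beta on subsets of F vanishing on F_asc is the same as a vector on F_des
  (together with the empty set for LL), and sum_(V <= i) beta_V is then the
  i-th entry of A^T beta (resp. A_0^T beta); this gives HAS and LL.
  Conditioning a relational model on the complement of a cell whose column is
  the unit vector of the overall-effect row gives the model whose matrix drops
  that column, the overall effect absorbing the normalizing constant; this
  turns LL into QLL and A_0 into A_1.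
  The degrees of freedom come from the independence of the rows of A, A_0 and
  A_1: A is unitriangular for inclusion, the zero column of A_0 isolates its
  first row, and for A_1 every row of A_0 is orthogonal to ((-1)^|i|)_i,
  because none of them is indexed by the full set F, which lies in F_asc. *)

Lemma big_option (R : nmodType) (T : finType) (F : option T -> R) :
  \sum_(x : option T) F x = F None + \sum_(t : T) F (Some t).
Proof.
rewrite (bigD1 None) //=; congr (_ + _).
rewrite (reindex_omap Some id) /=; last by case.
by apply: eq_bigl => t; rewrite eqxx.
Qed.

Lemma big_sig_cond (R : nmodType) (T : finType) (P Q : pred T) (F : T -> R) :
  \sum_(x : {x | P x} | Q (val x)) F (val x) = \sum_(x | P x && Q x) F x.
Proof. by rewrite (big_sub_cond P). Qed.

Lemma big_sig (R : nmodType) (T : finType) (P : pred T) (F : T -> R) :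
  \sum_(x : {x | P x}) F (val x) = \sum_(x | P x) F x.
Proof. by rewrite (big_sub P). Qed.

Definition zext (R : nmodType) (T : Type) (P : pred T) (g : {x | P x} -> R)
    (x : T) : R :=
  if insub x is Some y then g y else 0.

Lemma zextE (R : nmodType) (T : Type) (P : pred T) (g : {x | P x} -> R) y :
  zext g (val y) = g y.
Proof. by rewrite /zext valK. Qed.

Lemma zext_out (R : nmodType) (T : Type) (P : pred T) (g : {x | P x} -> R) x :
  ~~ P x -> zext g x = 0.
Proof. by move=> Px; rewrite /zext insubN. Qed.

Lemma sum_signed_supersets (R : numDomainType) (T : finType) (W : {set T}) :
  W != setT -> \sum_(i : {set T} | W \subset i) (-1) ^+ #|i| = 0 :> R.
Proof.
rewrite eqEsubset subsetT /= => /subsetPn[x _ xW].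
pose flip (i : {set T}) := if x \in i then i :\ x else x |: i.
have flipK : involutive flip.
  by move=> i; rewrite /flip; case: (boolP (x \in i)) => xi;
    rewrite ?setD11 ?setD1K ?setU11 ?setU1K.
have sub_flip i : (W \subset flip i) = (W \subset i).
  rewrite /flip; case: (x \in i); first by rewrite subsetD1 xW andbT.
  apply/idP/idP => [/subsetP sWx|/subset_trans-> //]; last exact: subsetUr.
  apply/subsetP => y yW; have := sWx y yW; rewrite in_setU1.
  by case/predU1P => // yx; rewrite -yx yW in xW.
have sign_flip i : (-1) ^+ #|flip i| = - (-1) ^+ #|i| :> R.
  rewrite /flip; case: (boolP (x \in i)) => xi; last by rewrite cardsU1 xi exprS mulN1r.
  by rewrite [in RHS](cardsD1 x i) xi exprS mulN1r opprK.
set S := (X in X = 0).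
have SN : S = - S.
  rewrite {1}/S (reindex_inj (inv_inj flipK)) /= -sumrN.
  by apply: eq_big => i; [rewrite sub_flip | rewrite sign_flip].
have : S *+ 2 == 0 by rewrite mulr2n {1}SN addNr.
by rewrite mulrn_eq0 => /eqP.
Qed.

Definition independent_rows (R : nzRingType) (S T : finType) (M : S -> T -> R) :=
  forall u : S -> R, (forall t, \sum_s u s * M s t = 0) -> forall s, u s = 0.

Lemma dof_independent_rows (R : realType) (S T : finType) (M : S -> T -> R) :
  independent_rows M -> dof M = (#|T| - #|S|)%N.
Proof.
move=> indepM; rewrite /dof.
suff /eqP -> : row_free (mx_of M) by [].
apply: inj_row_free => v vM0; apply/rowP => i; rewrite mxE.
pose u s := v 0 (enum_rank s).
suff /(_ (enum_val i)) : forall s, u s = 0 by rewrite /u enum_valK.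
apply: indepM => t; have /rowP/(_ (enum_rank t)) := vM0; rewrite !mxE => vMt.
rewrite -[RHS]vMt (reindex enum_rank) /=; last exact/onW_bij/enum_rank_bij.
by apply: eq_bigr => s _; rewrite mxE !enum_rankK.
Qed.

Lemma eq_rel_model (R : realType) (S T : finType) (M N : S -> T -> R) (p : T -> R) :
  M =2 N -> rel_model M p <-> rel_model N p.
Proof.
move=> eqMN; split=> -[p_gt0 [p1 [beta lnp]]]; do 2 split=> //; exists beta => t;
  by rewrite lnp; apply: eq_bigr => s _; rewrite eqMN.
Qed.

Section Conditioning.

Variables (R : realType) (S T : finType) (z w : T) (M : option S -> T -> R).
Hypotheses (wz : w != z) (M_None : forall t, M None t = 1).
Hypothesis M_z : forall s, M (Some s) z = 0.

Local Notation T' := {t : T | t != z}.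

Lemma rel_model_conditional (pi : T' -> R) :
  rel_model (fun s (t : T') => M s (val t)) pi <->
  exists p : T -> R, rel_model M p /\
    forall t : T', pi t = p (val t) / \sum_(u : T') p (val u).
Proof.
split.
  case=> pi_gt0 [pi1 [beta lnpi]].
  pose e := expR (beta None); pose c := (1 + e)^-1.
  have e_gt0 : 0 < e by apply: expR_gt0.
  have c_gt0 : 0 < c by rewrite invr_gt0 addr_gt0.
  (* ln p must be ln c + beta None at z, hence the mass c * e there. *)
  pose p t := c * (if insub t is Some u then pi u else e).
  have pE (u : T') : p (val u) = c * pi u by rewrite /p valK.
  have pz : p z = c * e by rewrite /p insubF ?eqxx.
  have sum_p : \sum_(u : T') p (val u) = c.
    by under eq_bigr do rewrite pE; rewrite -mulr_sumr pi1 mulr1.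
  exists p; split; last by move=> u; rewrite pE sum_p mulrAC mulfV ?mul1r ?gt_eqF.
  split; [|split].
  - move=> t; rewrite /p; case: insubP => [u _ _|_]; exact: mulr_gt0.
  - rewrite (bigD1 z) //= pz -(big_sig (fun t => t != z)) sum_p.
    by rewrite -[X in _ + X]mulr1 -mulrDr addrC mulVf ?gt_eqF ?addr_gt0.
  exists (fun s => if s is Some _ then beta s else ln c + beta None) => t.
  rewrite big_option M_None mul1r.
  have [->|tz] := eqVneq t z.
    rewrite pz lnM ?posrE // expRK big1 ?addr0 // => s _.
    by rewrite M_z mul0r.
  rewrite -[t]/(val (exist _ t tz : T')) pE lnM ?posrE // lnpi big_option.
  by rewrite M_None mul1r addrA.
case=> p [[p_gt0 [p1 [beta lnp]]] piE].
set Z := \sum_(u : T') p (val u).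
have Z_gt0 : 0 < Z.
  rewrite /Z (bigD1 (exist _ w wz)) //= ltr_wpDr ?p_gt0 //.
  by apply: sumr_ge0 => u _; apply: ltW.
split; [|split].
- by move=> u; rewrite piE divr_gt0.
- by under eq_bigr do rewrite piE; rewrite -mulr_suml divff ?gt_eqF.
exists (fun s => if s is Some _ then beta s else beta None - ln Z) => u.
rewrite piE ln_div ?posrE // lnp !big_option !M_None !mul1r.
by rewrite addrAC.
Qed.

End Conditioning.

Section FdesModels.

Variables (R : realType) (k : nat) (Fasc : {set {set 'I_k}}).

Lemma Fdes_neq0 (W : Fdes Fasc) : val W != set0.
Proof. by case/andP: (valP W). Qed.

Lemma zext_Fasc (g : Fdes Fasc -> R) V : V \in Fasc -> zext g V = 0.
Proof. by move=> VF; rewrite zext_out // /in_Fdes VF. Qed.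

Lemma sum_nonempty_subsets (G : {set 'I_k} -> R) (i : {set 'I_k}) :
  (forall V, V \in Fasc -> G V = 0) ->
  \sum_(V : {set 'I_k} | (V != set0) && (V \subset i)) G V =
  \sum_(W : Fdes Fasc) (if val W \subset i then 1 else 0) * G (val W).
Proof.
move=> G0.
rewrite (eq_bigr (fun W : Fdes Fasc => if val W \subset i then G (val W) else 0)).
  2: by move=> W _; case: ifP; rewrite ?mul1r ?mul0r.
rewrite -big_mkcond (big_sig_cond (in_Fdes Fasc) (fun V => V \subset i)).
rewrite (bigID (mem Fasc)) /= big1 ?add0r.
  by apply: eq_bigl => V; rewrite /in_Fdes andbC andbA.
by move=> V /andP[_ /G0].
Qed.

Lemma HAS_rel_model (p : cellI k -> R) :
  HAS Fasc p <-> rel_model (matA R (Fasc:=Fasc)) p.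
Proof.
split=> -[p_gt0 [p1 [beta lnp]]]; do 2 split=> //.
  case: lnp => lnp beta0; exists (fun W => zext beta (val W)) => i.
  rewrite lnp -(eq_bigr _ (fun V _ => zextE beta V)).
  rewrite (big_sig_cond (fun V => V != set0) (fun V => V \subset val i)).
  apply: sum_nonempty_subsets => V VF; rewrite /zext; case: insubP => // V' _ V'V.
  by rewrite beta0 // V'V.
exists (fun V : cellI k => zext beta (val V)); split=> [i|V]; last exact: zext_Fasc.
rewrite lnp (big_sig_cond (fun V => V != set0) (fun V => V \subset val i)).
rewrite sum_nonempty_subsets; last exact: zext_Fasc.
by apply: eq_bigr => W _; rewrite zextE.
Qed.

Lemma matA0_Some (W : Fdes Fasc) i :
  matA0 R (Some W) i = if val W \subset i then 1 else 0.
Proof.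
by rewrite /matA0; case: eqP => // ->; rewrite subset0 (negbTE (Fdes_neq0 W)).
Qed.

Lemma matA1E (s : option (Fdes Fasc)) (i : cellI k) :
  matA1 R s i = matA0 R s (val i).
Proof. by case: s => // W; rewrite matA0_Some. Qed.

Lemma sum_subsets_set0 (G : {set 'I_k} -> R) (i : {set 'I_k}) :
  \sum_(V : {set 'I_k} | V \subset i) G V =
  G set0 + \sum_(V : {set 'I_k} | (V != set0) && (V \subset i)) G V.
Proof. by rewrite (bigD1 set0) ?sub0set //=; under eq_bigl => V do rewrite andbC. Qed.

Hypothesis Fasc0 : set0 \notin Fasc.

Lemma LL_rel_model (p : {set 'I_k} -> R) :
  LL Fasc p <-> rel_model (matA0 R (Fasc:=Fasc)) p.
Proof.
split=> -[p_gt0 [p1 [beta lnp]]]; do 2 split=> //.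
  case: lnp => lnp beta0; exists (fun s => beta (oapp val set0 s)) => i.
  rewrite lnp sum_subsets_set0 sum_nonempty_subsets // big_option mul1r.
  by congr (_ + _); apply: eq_bigr => W _; rewrite matA0_Some.
exists (fun V => if V == set0 then beta None else zext (beta \o Some) V); split.
  move=> i; rewrite lnp sum_subsets_set0 eqxx big_option mul1r; congr (_ + _).
  rewrite (eq_bigr (zext (beta \o Some))); last by move=> V /andP[/negbTE ->].
  rewrite sum_nonempty_subsets; last exact: zext_Fasc.
  by apply: eq_bigr => W _; rewrite matA0_Some zextE.
move=> V VF; have V0 : V != set0 by apply: contraNneq Fasc0 => <-.
by rewrite (negbTE V0) zext_Fasc.
Qed.

Lemma QLL_rel_model (pi : cellI k -> R) : [set: 'I_k] != set0 ->
  QLL Fasc pi <-> rel_model (matA1 R (Fasc:=Fasc)) pi.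
Proof.
move=> T0.
have M_z (W : Fdes Fasc) : matA0 R (Some W) set0 = 0 by rewrite /matA0 eqxx.
have cond := rel_model_conditional T0 (fun _ => erefl) M_z pi.
have eqM := eq_rel_model pi (fun s i => esym (matA1E s i)).
split; first by case=> p [/LL_rel_model pLL piE]; apply/eqM/cond; exists p.
by move=> /eqM/cond[p [/LL_rel_model pLL piE]]; exists p.
Qed.

Lemma matA_independent : independent_rows (matA R (Fasc:=Fasc)).
Proof.
move=> u uA0.
suff u0 n (W : Fdes Fasc) : (#|val W| < n)%N -> u W = 0.
  by move=> W; apply: (u0 _ W (ltnSn _)).
elim: n W => [//|n IHn] W ltWn.
have := uA0 (exist _ (val W) (Fdes_neq0 W)).
rewrite (bigD1 W) //= /matA /= subxx mulr1 big1 ?addr0 // => W' W'W.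
case: ifP => [sW'W|]; last by rewrite mulr0.
have [/val_inj eqW'W|ltW'W] := eqVproper sW'W; first by rewrite eqW'W eqxx in W'W.
by rewrite IHn ?mul0r // (leq_trans (proper_card ltW'W)).
Qed.

Lemma matA1_independent_None (u : option (Fdes Fasc) -> R) :
  u None = 0 -> (forall i, \sum_s u s * matA1 R s i = 0) -> forall s, u s = 0.
Proof.
move=> uN0 uA1; case=> // W; apply: (@matA_independent (u \o Some) _ W) => i.
by rewrite -[RHS](uA1 i) big_option uN0 mul0r add0r.
Qed.

Lemma sum_matA0_set0 (u : option (Fdes Fasc) -> R) :
  \sum_s u s * matA0 R s set0 = u None.
Proof.
rewrite big_option mulr1 big1 ?addr0 // => W _.
by rewrite /matA0 eqxx mulr0.
Qed.

Lemma matA0_independent : independent_rows (matA0 R (Fasc:=Fasc)).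
Proof.
move=> u uA0; apply: matA1_independent_None => [|i]; first by rewrite -sum_matA0_set0.
by rewrite -[RHS](uA0 (val i)); apply: eq_bigr => s _; rewrite matA1E.
Qed.

Lemma matA0E (s : option (Fdes Fasc)) i :
  matA0 R s i = if oapp val set0 s \subset i then 1 else 0.
Proof. by case: s => [W|]; rewrite ?matA0_Some ?sub0set. Qed.

Hypothesis setT_Fasc : [set: 'I_k] \in Fasc.

Lemma signed_sum_matA0 (s : option (Fdes Fasc)) :
  \sum_(i : {set 'I_k}) (-1) ^+ #|i| * matA0 R s i = 0.
Proof.
have sT : oapp val set0 s != setT.
  case: s => [W|] /=; apply: contraTneq setT_Fasc => <- //.
  by case/andP: (valP W).
rewrite -[RHS](sum_signed_supersets R sT) [RHS]big_mkcond; apply: eq_bigr => i _.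
by rewrite matA0E; case: ifP; rewrite ?mulr1 ?mulr0.
Qed.

Lemma matA1_independent : independent_rows (matA1 R (Fasc:=Fasc)).
Proof.
move=> u uA1; apply: matA1_independent_None => //.
pose g i := \sum_s u s * matA0 R s i.
have g0 i : i != set0 -> g i = 0.
  by move=> i0; rewrite -(uA1 (exist _ i i0)); apply: eq_bigr => s _; rewrite matA1E.
have : \sum_(i : {set 'I_k}) (-1) ^+ #|i| * g i = 0.
  under eq_bigr do rewrite mulr_sumr.
  rewrite exchange_big big1 //= => s _.
  under eq_bigr do rewrite mulrCA.
  by rewrite -mulr_sumr signed_sum_matA0 mulr0.
rewrite (bigD1 set0) //= big1 ?addr0 => [|i /g0 ->]; last by rewrite mulr0.
by rewrite cards0 mul1r /g sum_matA0_set0.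
Qed.

Lemma card_Fdes : (#|Fasc| + #|{: Fdes Fasc}|).+1 = #|{: {set 'I_k}}|.
Proof.
rewrite card_sig -(cardsC Fasc) (cardsD1 set0 (~: Fasc)) in_setC Fasc0 add1n addnS.
by congr (_ + _).+1; apply: eq_card => V; rewrite !inE andbC.
Qed.

Lemma card_cellI : #|{: cellI k}| = (#|Fasc| + #|{: Fdes Fasc}|)%N.
Proof.
by rewrite card_sig -[RHS]/(_.+1.-1) card_Fdes -(cardC1 (set0 : {set 'I_k})).
Qed.

End FdesModels.

Theorem theorem5 (R : realType) (k : nat) (Fasc : {set {set 'I_k}}) :
  Fasc != set0 -> ascending Fasc -> set0 \notin Fasc ->
  (forall p : cellI k -> R, HAS Fasc p <-> rel_model (matA R (Fasc:=Fasc)) p) /\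
  (forall p : cellI k -> R, QLL Fasc p <-> rel_model (matA1 R (Fasc:=Fasc)) p) /\
  (forall p : {set 'I_k} -> R, LL Fasc p <-> rel_model (matA0 R (Fasc:=Fasc)) p) /\
  dof (matA R (Fasc:=Fasc)) = #|Fasc| /\
  dof (matA0 R (Fasc:=Fasc)) = #|Fasc| /\
  dof (matA1 R (Fasc:=Fasc)) = (#|Fasc| - 1)%N.
Proof.
move=> Fasc_neq0 Fasc_asc Fasc0.
have setT_Fasc : [set: 'I_k] \in Fasc.
  by case/set0Pn: Fasc_neq0 => V VF; apply: Fasc_asc VF (subsetT V).
have setT_neq0 : [set: 'I_k] != set0 by apply: contraNneq Fasc0 => <-.
split; first exact: HAS_rel_model.
split; first by move=> p; apply: QLL_rel_model.
split; first exact: LL_rel_model.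
split.
  rewrite dof_independent_rows ?(card_cellI Fasc0) ?addnK //.
  exact: (@matA_independent R k Fasc).
split.
  rewrite dof_independent_rows ?card_option -?(card_Fdes Fasc0) ?subSS ?addnK //.
  exact: (@matA0_independent R k Fasc).
rewrite dof_independent_rows ?card_option ?(card_cellI Fasc0) ?subnS ?addnK ?subn0 //.
exact: (@matA1_independent R k Fasc Fasc0 setT_Fasc).
Qed.
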